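(* Let $d \ge 1$ be an integer and $p$ a prime number. Choose the coefficient vector $(a_0, a_1, \ldots, a_d)$ uniformly at random in $(\mathbb{Z}/p\mathbb{Z})^{d+1}$ (each of the $p^{d+1}$ vectors with probability $p^{-(d+1)}$), and let $P(x) = a_0x^d + a_1x^{d-1} + \cdots + a_{d-1}x + a_d$. Then the probability that $p$ is not a periodic prime divisor of $P$, i.e. that $P(m) \not\equiv 0 \pmod p$ for every $m \in \mathbb{Z}$, equals $$D_d(p) = \left(1-\frac1p\right)\sum_{k=0}^{\min(d,p-1)} (-1)^k \binom{p-1}{k} p^{-k}.$$ In particular, if $p \le d+1$, then $D_d(p) = \left(1-\frac1p\right)^p$.
   Context: A prime $p$ is called a periodic prime divisor (d.p.p.) of an integer-valued polynomial $P$ if for every $m \in \mathbb{Z}$, $p$ divides at least one of $P(m), P(m+1), \ldots, P(m+p-1)$; for a polynomial with integer coefficients this holds if and only if there exists $m \in \mathbb{Z}$ with $p \mid P(m)$. The polynomials considered have integer coefficients and the random model is the uniform distribution of the coefficients modulo $p$ (leading coefficient allowed to be $0$ mod $p$). *)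

From HB Require Import structures.
From mathcomp Require Import all_boot all_order all_algebra.
From mathcomp Require Import boolp.
Set Implicit Arguments. Unset Strict Implicit. Unset Printing Implicit Defensive.
Import Order.TTheory GRing.Theory Num.Theory.
Local Open Scope ring_scope.

(* Coefficient vector (a_0,...,a_d) with a_i in Z/pZ, represented by its
   canonical residues 0..p-1 (elements of 'I_p). *)
Definition coeffs (d p : nat) := {ffun 'I_d.+1 -> 'I_p}.

Definition evalP (d p : nat) (a : coeffs d p) (m : int) : int :=
  \sum_(i < d.+1) ((a i : nat)%:Z) * m ^+ (d - i)%N.

Definition not_dpp (d p : nat) (a : coeffs d p) : Prop :=
  forall m : int, ~ ((p%:Z %| evalP a m)%Z).

Definition prob_not_dpp (d p : nat) : rat :=
  (#|[set a : coeffs d p | `[< not_dpp a >]]|)%:R / (p ^ d.+1)%:R.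

Definition D (d p : nat) : rat :=
  (1 - (p%:R)^-1) *
  \sum_(k < (minn d p.-1).+1) (-1) ^+ k * ('C(p.-1, k))%:R / (p%:R) ^+ k.

From HB Require Import structures.
From mathcomp Require Import all_boot all_order all_algebra.
From mathcomp Require Import boolp.
From mathcomp Require Import ring.
Set Implicit Arguments. Unset Strict Implicit. Unset Printing Implicit Defensive.
Import Order.TTheory GRing.Theory Num.Theory.
Local Open Scope ring_scope.

(* A polynomial with integer coefficients has no integer root mod p iff its
   reduction, a polynomial of degree <= d over F_p, has no root in F_p.
   Over a finite field with q elements let N_n(S), for 0 \notin S, count the
   polynomials of degree <= n that are nonzero at 0 and have no root in S.
   Those with a root at a further point t are exactly ('X - t) Q with Q of
   degree <= n - 1 counted by N_(n-1)(S), so N_n(t |: S) = N_n(S) - N_(n-1)(S).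
   From N_n(set0) = (q - 1) q^n this Pascal-type recurrence gives
   N_n(S) = (q - 1) sum_(j <= n) (-1)^j C(|S|, j) q^(n-j); the sum stops at
   j = n because requiring P(0) <> 0 excludes the zero polynomial.
   Taking S = F_p \ {0} yields D_d(p). *)

Definition incl_excl_sum (R : nzRingType) (x : R) n k :=
  \sum_(j < n.+1) (-1) ^+ j * 'C(k, j)%:R * x ^+ (n - j).

Lemma incl_excl_sum0 (R : nzRingType) (x : R) k : incl_excl_sum x 0 k = 1.
Proof. by rewrite /incl_excl_sum big_ord1 bin0 !mulr1. Qed.

Lemma incl_excl_sum_n0 (R : nzRingType) (x : R) n : incl_excl_sum x n 0 = x ^+ n.
Proof.
rewrite /incl_excl_sum big_ord_recl big1 => [|j _]; last by rewrite bin0n mulr0 mul0r.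
by rewrite bin0 subn0 addr0 !mul1r.
Qed.

Lemma incl_excl_sumSS (R : nzRingType) (x : R) n k :
  incl_excl_sum x n.+1 k.+1 = incl_excl_sum x n.+1 k - incl_excl_sum x n k.
Proof.
rewrite /incl_excl_sum big_ord_recl [in RHS]big_ord_recl !bin0 -addrA; congr (_ + _).
rewrite -sumrN -big_split; apply: eq_bigr => j _ /=.
by rewrite /bump /= add1n subSS binS natrD exprS mulrDr mulrDl !mulN1r !mulNr.
Qed.

Lemma incl_excl_sumE (F : fieldType) (x : F) n k : x != 0 ->
  incl_excl_sum x n k =
  x ^+ n * \sum_(j < (minn n k).+1) (-1) ^+ j * 'C(k, j)%:R / x ^+ j.
Proof.
move=> x0; rewrite mulr_sumr.
rewrite (big_ord_widen n.+1 (fun j => x ^+ n * ((-1) ^+ j * 'C(k, j)%:R / x ^+ j)));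
  last by rewrite ltnS geq_minl.
rewrite big_mkcond; apply: eq_bigr => j _; rewrite ltnS leq_min -ltnS ltn_ord /=.
case: leqP => [jk | /bin_small->]; last by rewrite !(mulr0, mul0r).
by rewrite exprB ?leq_ord ?unitfE //; ring.
Qed.

Lemma sum_binom_invX (F : fieldType) (x : F) k :
  \sum_(j < k.+1) (-1) ^+ j * 'C(k, j)%:R / x ^+ j = (1 - x^-1) ^+ k.
Proof.
rewrite exprBn; apply: eq_bigr => j _.
by rewrite expr1n mulr1 exprVn mulr_natr -mulrnAl -mulr_natr.
Qed.

Section NonrootCount.
Variable F : finFieldType.
Local Notation q := #|F|.

Definition nonroot_on (S : {set F}) (P : {poly F}) := [forall x in S, ~~ root P x].

Definition nonroot_count n (S : {set F}) :=
  #|[set v : 'rV[F]_n | nonroot_on S (rVpoly v)]|.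

Lemma nonroot_onU1 (t : F) (S : {set F}) (P : {poly F}) :
  nonroot_on (t |: S) P = ~~ root P t && nonroot_on S P.
Proof.
apply/forall_inP/andP => [h | [Pt /forall_inP h] x].
  by split; [apply: h; rewrite setU11 | apply/forall_inP => x xS; apply: h; rewrite setU1r].
by case/setU1P => [-> | /h].
Qed.

Lemma nonroot_on_XsubCM (t : F) (S : {set F}) (P : {poly F}) : t \notin S ->
  nonroot_on S (('X - t%:P) * P) = nonroot_on S P.
Proof.
move=> tS; apply: eq_forallb_in => x xS.
by rewrite rootM root_XsubC; case: eqP xS => [-> | //]; rewrite (negbTE tS).
Qed.

Lemma size_rVpoly n (v : 'rV[F]_n) : (size (rVpoly v) <= n)%N.
Proof. exact: size_poly. Qed.

Lemma card_rVpoly_root n (t : F) (A : pred {poly F}) :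
  #|[set v : 'rV[F]_n.+1 | root (rVpoly v) t && A (rVpoly v)]| =
  #|[set w : 'rV[F]_n | A (('X - t%:P) * rVpoly w)]|.
Proof.
pose mulXt (w : 'rV[F]_n) : 'rV[F]_n.+1 := poly_rV (('X - t%:P) * rVpoly w).
have mulXtE w : rVpoly (mulXt w) = ('X - t%:P) * rVpoly w.
  apply: poly_rV_K; apply: leq_trans (size_polyMleq _ _) _.
  by rewrite size_XsubC; exact: size_rVpoly.
have mulXt_inj : injective mulXt.
  move=> w1 w2 /(congr1 rVpoly); rewrite !mulXtE => /(mulfI (negbT (polyXsubC_eq0 t))).
  exact: (can_inj rVpolyK).
rewrite -(card_imset _ mulXt_inj); apply: eq_card => v; rewrite inE.
apply/andP/imsetP => [[Pt PA] | [w]]; last first.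
  by rewrite inE => wA ->; rewrite mulXtE rootM root_XsubC eqxx.
pose Q := rVpoly v %/ ('X - t%:P).
have QE : ('X - t%:P) * Q = rVpoly v by rewrite mulrC divpK ?dvdp_XsubCl.
have sizeQ : (size Q <= n)%N.
  by rewrite size_divp ?polyXsubC_eq0 // size_XsubC leq_subLR add1n size_rVpoly.
exists (poly_rV Q); first by rewrite inE poly_rV_K // QE.
by apply: (can_inj rVpolyK); rewrite mulXtE poly_rV_K.
Qed.

Lemma nonroot_count_U1 n (t : F) (S : {set F}) : t \notin S ->
  (nonroot_count n.+1 (t |: S) + nonroot_count n S)%N = nonroot_count n.+1 S.
Proof.
move=> tS; have -> : nonroot_count n S =
    #|[set v : 'rV[F]_n.+1 | root (rVpoly v) t && nonroot_on S (rVpoly v)]|.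
  by rewrite card_rVpoly_root; apply: eq_card => w; rewrite !inE nonroot_on_XsubCM.
rewrite /nonroot_count -[in RHS](cardsID [set v | root (rVpoly v) t]) addnC.
by congr (_ + _)%N; apply: eq_card => v; rewrite !inE ?nonroot_onU1 // andbC.
Qed.

Lemma nonroot_count_set0 n : nonroot_count n set0 = (q ^ n)%N.
Proof.
have := card_mx F 1 n; rewrite mul1n => <-.
by apply: eq_card => v; rewrite !inE; apply/forall_inP => x; rewrite inE.
Qed.

Lemma nonroot_count_set1_0 (R : comNzRingType) n :
  (nonroot_count n.+1 [set 0])%:R = (q%:R - 1) * q%:R ^+ n :> R.
Proof.
have := nonroot_count_U1 n (negbT (in_set0 0)); rewrite setU0 !nonroot_count_set0.
move=> /(congr1 (fun m => m%:R : R)); rewrite natrD !natrX => /(canRL (addrK _)) ->.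
by rewrite exprS mulrBl mul1r.
Qed.

Lemma nonroot_count_const (S : {set F}) : 0 \in S ->
  nonroot_count 1 S = nonroot_count 1 [set 0].
Proof.
move=> S0; apply: eq_card => v; rewrite !inE.
rewrite [rVpoly v]size1_polyC ?size_rVpoly //.
apply/forall_inP/forall_inP => [h x /set1P -> | h x _]; first exact: h.
by rewrite rootC -(rootC _ 0); apply: h; rewrite set11.
Qed.

Lemma nonroot_count_formula (R : comNzRingType) n (S : {set F}) : 0 \notin S ->
  (nonroot_count n.+1 (0 |: S))%:R = (q%:R - 1) * incl_excl_sum (q%:R : R) n #|S|.
Proof.
move: {2}#|S| (erefl #|S|) => k; elim: k S n => [|k IH] S n cardS S0.
  move/eqP: cardS; rewrite cards_eq0 => /eqP ->.
  by rewrite setU0 cards0 incl_excl_sum_n0 nonroot_count_set1_0.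
have /card_gt0P[t tS] : (0 < #|S|)%N by rewrite cardS.
have cardSt : #|S :\ t| = k by move: cardS; rewrite (cardsD1 t S) tS => -[].
have S0t : 0 \notin S :\ t by rewrite !inE negb_and S0 orbT.
have t0 : t != 0 by apply: contraNneq S0 => <-.
have tS0 : t \notin 0 |: S :\ t by rewrite !inE negb_or t0 eqxx.
have ->: 0 |: S = t |: (0 |: S :\ t) by rewrite setUCA setD1K.
case: n => [|n].
  rewrite nonroot_count_const ?nonroot_count_set1_0 ?incl_excl_sum0 ?expr0 //.
  by rewrite !inE eqxx orbT.
have := congr1 (fun m => m%:R : R) (nonroot_count_U1 n.+1 tS0).
rewrite natrD => /(canRL (addrK _)) ->.
by rewrite !IH // cardS cardSt incl_excl_sumSS mulrBr.
Qed.

End NonrootCount.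

Section PeriodicPrimeDivisor.
Variables (d p : nat).
Hypothesis p_prime : prime p.

(* [coeffs] lists the leading coefficient first, [rVpoly] the constant one. *)
Definition coeffs_rV (a : coeffs d p) : 'rV['F_p]_d.+1 :=
  \row_j (a (rev_ord j) : nat)%:R.

Lemma evalP_rVpoly (a : coeffs d p) (m : int) :
  (evalP a m)%:~R = (rVpoly (coeffs_rV a)).[m%:~R] :> 'F_p.
Proof.
rewrite /evalP rmorph_sum horner_poly (reindex_inj rev_ord_inj) /=.
apply: eq_bigr => j _; rewrite valK mxE rmorphM rmorphXn /=.
by rewrite subSS subKn ?leq_ord.
Qed.

Lemma coeffs_rV_inj : injective coeffs_rV.
Proof.
move=> a b /rowP eq_ab; apply/ffunP => i; apply: val_inj.
have := congr1 val (eq_ab (rev_ord i)); rewrite !mxE rev_ordK /= !val_Fp_nat //.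
by rewrite !modn_small.
Qed.

Lemma coeffs_rV_bij : bijective coeffs_rV.
Proof.
apply: inj_card_bij coeffs_rV_inj _.
by rewrite card_ffun card_mx mul1n card_Fp // !card_ord.
Qed.

Lemma not_dppE (a : coeffs d p) :
  not_dpp a <-> nonroot_on [set: 'F_p] (rVpoly (coeffs_rV a)).
Proof.
have dvdpE m : (p%:Z %| evalP a m)%Z = root (rVpoly (coeffs_rV a)) m%:~R.
  by rewrite (dvdz_pcharf (pchar_Fp p_prime)) evalP_rVpoly.
split=> [not_dvd | /forall_inP nonroot m].
  apply/forall_inP => x _; apply/negP => root_x.
  by apply: (not_dvd (x : nat)%:Z); rewrite dvdpE -[(_)%:~R]/((x : nat)%:R) natr_Zp.
by rewrite dvdpE; apply/negP; apply: nonroot.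
Qed.

Lemma card_not_dpp :
  #|[set a : coeffs d p | `[< not_dpp a >]]| = nonroot_count d.+1 [set: 'F_p].
Proof.
rewrite /nonroot_count -(on_card_preimset (onW_bij _ coeffs_rV_bij)).
by apply: eq_card => a; rewrite !inE; apply/asboolP/idP => /not_dppE.
Qed.

End PeriodicPrimeDivisor.

Theorem proposition1 (d p : nat) (hd : (1 <= d)%N) (hp : prime p) :
  prob_not_dpp d p = D d p /\
  ((p <= d.+1)%N -> D d p = (1 - (p%:R : rat)^-1) ^+ p).
Proof.
have p_gt0 : (0 < p)%N by rewrite prime_gt0.
have p_neq0 : (p%:R : rat) != 0 by rewrite pnatr_eq0 -lt0n.
have setT_Fp : [set: 'F_p] = 0 |: [set~ 0] by rewrite -setTD setD1K.
split.
  rewrite /prob_not_dpp card_not_dpp // setT_Fp nonroot_count_formula ?setC11 //.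
  rewrite cardsC1 card_Fp // incl_excl_sumE // /D natrX exprS.
  by field; rewrite p_neq0 expf_neq0.
move=> p_le_dS; rewrite /D (minn_idPr _) ?sum_binom_invX; last by rewrite -ltnS prednK.
by rewrite -exprS prednK.
Qed.
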